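(* In the setting described in the context, for arbitrary but fixed $\tilde u\in U_h^{(2)}$ and $\tilde z\in V_h^{(2)}$, the error representation $$J(u_h^{(2)})-J(\tilde u)=\tfrac12\rho(\tilde u)(z_h^{(2)}-\tilde z)+\tfrac12\rho^*(\tilde u,\tilde z)(u_h^{(2)}-\tilde u)+\rho(\tilde u)(\tilde z)+\mathcal{R}^{(3)(2)}$$ holds.
   Context: Let $U$ and $V$ be real Banach spaces with dual $V^*$. Let $\mathcal{A}:U\to V^*$ be a (nonlinear) operator that is three times continuously Fréchet differentiable, and let $J:U\to\mathbb{R}$ be three times continuously Fréchet differentiable. Notation: $\mathcal{A}(w)(v)$ is the value of $\mathcal{A}(w)\in V^*$ at $v\in V$. For fixed $v$, $\mathcal{A}'(w)(\varphi,v)$, $\mathcal{A}''(w)(\varphi,\psi,v)$ and $\mathcal{A}'''(w)(\varphi,\psi,\chi,v)$ denote the first, second and third Fréchet derivatives of $w\mapsto\mathcal{A}(w)(v)$ at $w$ in the directions $\varphi,\psi,\chi\in U$. Analogously, $J'(w)(\varphi)$ and $J'''(w)(\varphi,\psi,\chi)$ denote derivatives of $J$. Let $U_h^{(2)}\subset U$ and $V_h^{(2)}\subset V$ be finite-dimensional subspaces. Let $u_h^{(2)}\in U_h^{(2)}$ satisfy $\mathcal{A}(u_h^{(2)})(v)=0$ for all $v\in V_h^{(2)}$. Let $z_h^{(2)}\in V_h^{(2)}$ satisfy $\mathcal{A}'(u_h^{(2)})(\varphi,z_h^{(2)})=J'(u_h^{(2)})(\varphi)$ for all $\varphi\in U_h^{(2)}$.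 Define $\rho(\tilde u)(v):=-\mathcal{A}(\tilde u)(v)$ and $\rho^*(\tilde u,\tilde z)(\varphi):=J'(\tilde u)(\varphi)-\mathcal{A}'(\tilde u)(\varphi,\tilde z)$. With $e^{(2)}:=u_h^{(2)}-\tilde u$ and $e^{(2),*}:=z_h^{(2)}-\tilde z$, define $$\mathcal{R}^{(3)(2)}:=\frac12\int_0^1\Big[J'''(\tilde u+se^{(2)})(e^{(2)},e^{(2)},e^{(2)})-\mathcal{A}'''(\tilde u+se^{(2)})(e^{(2)},e^{(2)},e^{(2)},\tilde z+se^{(2),*})-3\mathcal{A}''(\tilde u+se^{(2)})(e^{(2)},e^{(2)},e^{(2),*})\Big]s(s-1)\,ds.$$ *)

From HB Require Import structures.
From mathcomp Require Import all_boot all_order all_algebra.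
From mathcomp Require Import all_classical all_reals all_analysis.
Set Implicit Arguments. Unset Strict Implicit. Unset Printing Implicit Defensive.
Import Order.TTheory GRing.Theory Num.Theory.
Import numFieldNormedType.Exports.
Local Open Scope classical_set_scope.
Local Open Scope ring_scope.

Definition fin_dim_subspace {R : realType} {U : normedModType R} (S : set U) : Prop :=
  exists (n : nat) (b : 'I_n -> U),
    S = [set x | exists c : 'I_n -> R, x = \sum_(i < n) c i *: b i].

(* [f : U -> R] is three times continuously Frechet differentiable, with
   f' = f1, f'' = f2, f''' = f3 (f1 w phi = f'(w)(phi), etc.):
   each derivative is the Frechet differential of the previous one,
   and the third derivative depends continuously on the base point. *)
Definition C3_derivs {R : realType} {U : normedModType R} (f : U -> R)
    (f1 : U -> U -> R) (f2 : U -> U -> U -> R) (f3 : U -> U -> U -> U -> R) : Prop :=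
  [/\ (forall w : U, is_diff w f (f1 w)),
      (forall (phi w : U), is_diff w (fun w' => f1 w' phi) (f2 w phi)),
      (forall (phi psi w : U), is_diff w (fun w' => f2 w' phi psi) (f3 w phi psi)) &
      (forall (phi psi chi : U), continuous (fun w => f3 w phi psi chi))].

Definition dual_valued {R : realType} {U V : normedModType R} (A : U -> V -> R) : Prop :=
  forall w : U,
    (forall (a : R) (v1 v2 : V), A w (a *: v1 + v2) = a * A w v1 + A w v2)
    /\ continuous (A w).

Definition rho {R : realType} {U V : normedModType R} (A : U -> V -> R)
  (ut : U) (v : V) : R := - A ut v.

Definition rho_star {R : realType} {U V : normedModType R}
  (J1 : U -> U -> R) (A1 : U -> U -> V -> R) (ut : U) (zt : V) (phi : U) : R :=
  J1 ut phi - A1 ut phi zt.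

Definition remainder32 {R : realType} {U V : normedModType R}
  (J3 : U -> U -> U -> U -> R) (A2 : U -> U -> U -> V -> R)
  (A3 : U -> U -> U -> U -> V -> R) (ut uh : U) (zt zh : V) : \bar R :=
  let e := uh - ut in
  let es := zh - zt in
  ((1/2)%:E * \int[@lebesgue_measure R]_(s in `[0%R, 1%R])
     ((J3 (ut + s *: e) e e e
       - A3 (ut + s *: e) e e e (zt + s *: es)
       - 3 * A2 (ut + s *: e) e e es) * (s * (s - 1)))%:E)%E.

(* Let u(s) = ut + s e, z(s) = zt + s e^* on [0, 1] and let g(s) = J u(s) - A u(s) z(s) be the
   Lagrangian along this segment. The trapezoidal rule with its Peano remainder gives
   g(1) - g(0) = (g'(0) + g'(1)) / 2 + 1/2 \int_0^1 g'''(s) s (s - 1) ds, and the integral term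
   is exactly R^(3)(2). The discrete primal equation gives g(1) = J(uh), and with the discrete
   adjoint equation g'(1) = J'(uh) e - A'(uh)(e, zh) - A(uh) e^* = 0. Finally
   g(0) = J(ut) + rho(ut)(zt) and g'(0) = rho^*(ut, zt)(e) + rho(ut)(zh - zt). *)
From HB Require Import structures.
From mathcomp Require Import all_boot all_order all_algebra.
From mathcomp Require Import all_classical all_reals all_analysis.
From mathcomp Require Import ring lra.
Set Implicit Arguments.
Unset Strict Implicit.
Unset Printing Implicit Defensive.
Import Order.TTheory GRing.Theory Num.Theory.
Import numFieldNormedType.Exports.
Local Open Scope classical_set_scope.
Local Open Scope ring_scope.

Section DerivativeChains.
Variable R : realType.

Lemma is_derive_continuous (f df : R -> R) :
  (forall s, is_derive s (1 : R) f (df s)) -> continuous f.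
Proof.
move=> f' s; apply: differentiable_continuous.
by apply/derivable1_diffP; exact: ex_derive.
Qed.

Lemma integral_is_derive (f F : R -> R) (a b : R) : a < b -> continuous f ->
  (forall s, is_derive s (1 : R) F (f s)) ->
  (\int[@lebesgue_measure R]_(x in `[a, b]) (f x)%:E = (F b - F a)%:E)%E.
Proof.
move=> ab cf F'; rewrite EFinB; apply: continuous_FTC2 => //.
- exact: continuous_subspaceT.
- have cF := is_derive_continuous F'.
  split; [by move=> x _; exact: ex_derive | | ].
  + exact/cvg_at_right_filter/cF.
  + exact/cvg_at_left_filter/cF.
- by move=> x _; rewrite derive1E derive_val.
Qed.

Definition derive_chain (n : nat) (g : nat -> R -> R) : Prop :=
  forall k s, (k < n)%N -> is_derive s (1 : R) (g k) (g k.+1 s).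

Lemma derive_chain_continuous n g k :
  derive_chain n g -> (k < n)%N -> continuous (g k).
Proof. by move=> dg kn; apply: is_derive_continuous => s; exact: dg. Qed.

Lemma derive_chainB n f g :
  derive_chain n f -> derive_chain n g -> derive_chain n (fun k s => f k s - g k s).
Proof.
move=> df dg k s kn.
by apply: is_derive_eq; [apply: is_deriveB; [exact: df | exact: dg] | ].
Qed.

(* Leibniz rule for the derivatives of [s * c 0 s]; at [k = 0] the junk index [0.-1 = 0]
   is harmless since its coefficient vanishes. *)
Lemma derive_chain_mul_id n c :
  derive_chain n c -> derive_chain n (fun k s => k%:R * c k.-1 s + s * c k s).
Proof.
move=> dc [|k] s kn; (apply: is_derive_eq; first by apply: is_deriveD; apply: is_deriveM;
  first [exact: dc | apply: dc; exact: ltnW | exact: is_derive_id | exact: is_derive_cst]).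
- by rewrite /GRing.scale /=; lra.
- by rewrite /GRing.scale /= !mulrS; lra.
Qed.

Lemma continuous_derive_chain_mul_id n c :
  derive_chain n c -> continuous (c n) ->
  continuous (fun s => n%:R * c n.-1 s + s * c n s).
Proof.
move=> dc cn s.
have cn1 : continuous (c n.-1) by case: n dc cn => // n dc _; exact: derive_chain_continuous dc _.
exact: (continuousD (continuousM (cvg_cst _) (cn1 s)) (continuousM cvg_id (cn s))).
Qed.

Lemma trapezoid_rule_error (g : nat -> R -> R) :
  derive_chain 3 g -> continuous (g 3%N) ->
  ((1/2)%:E * \int[@lebesgue_measure R]_(s in `[0%R, 1%R]) (g 3%N s * (s * (s - 1)))%:E
   = (g 0%N 1 - g 0%N 0 - (g 1%N 0 + g 1%N 1) / 2)%:E)%E.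
Proof.
move=> dg cg3.
(* Integrating by parts twice against the kernel [s (s - 1)]. *)
pose Phi s := g 2%N s * (s * (s - 1)) - g 1%N s * (2 * s - 1) + 2 * g 0%N s.
have dPhi s : is_derive s (1 : R) Phi (g 3%N s * (s * (s - 1))).
  apply: is_derive_eq.
    by repeat first [apply: is_deriveD | apply: is_deriveB | apply: is_deriveN
      | apply: is_deriveM | exact: dg | exact: is_derive_id | exact: is_derive_cst].
  rewrite /GRing.scale /=; lra.
have cPhi' : continuous (fun s => g 3%N s * (s * (s - 1))).
  move=> s; apply: (continuousM (cg3 s)).
  by apply: continuousM; [exact: cvg_id | apply: continuousB; [exact: cvg_id | exact: cvg_cst]].
rewrite (integral_is_derive ltr01 cPhi' dPhi) -EFinM; congr EFin.
rewrite /Phi; lra.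
Qed.
End DerivativeChains.

Section AlongLine.
Variables (R : realType) (U : normedModType R).

Lemma is_diff_line (u e : U) (s : R) : is_diff s (fun t : R => u + t *: e) ( *:%R^~ e).
Proof.
have h : is_diff s (cst u + ( *:%R^~ e)) (0 + ( *:%R^~ e)) by exact: is_diffD.
by apply: is_diff_eq; rewrite add0r.
Qed.

Lemma is_derive_along_line (F : U -> R) (dF : U -> U -> R) (u e : U) (s : R) :
  is_diff (u + s *: e) F (dF (u + s *: e)) ->
  is_derive s (1 : R) (fun t => F (u + t *: e)) (dF (u + s *: e) e).
Proof.
move=> hF; have hc := is_diff_comp (is_diff_line u e s) hF.
apply: DeriveDef; first exact: diff_derivable.
by rewrite deriveE // diff_val /= scale1r.
Qed.

Lemma continuous_along_line (F : U -> R) (u e : U) :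
  continuous F -> continuous (fun s : R => F (u + s *: e)).
Proof.
move=> cF s; apply: (@continuous_comp _ _ _ (fun t : R => u + t *: e) F); last exact: cF.
by have := is_diff_line u e s; move/(@ex_diff _ _ _ _ _ _) /differentiable_continuous.
Qed.

Definition line_derivs (F0 : U -> R) (F1 : U -> U -> R) (F2 : U -> U -> U -> R)
    (F3 : U -> U -> U -> U -> R) (u e : U) (k : nat) (s : R) : R :=
  let w := u + s *: e in
  match k with 0 => F0 w | 1 => F1 w e | 2 => F2 w e e | _ => F3 w e e e end.

Lemma derive_chain_line_derivs F0 F1 F2 F3 (u e : U) :
  C3_derivs F0 F1 F2 F3 -> derive_chain 3 (line_derivs F0 F1 F2 F3 u e).
Proof.
case=> d1 d2 d3 _ [|[|[|k]]] s // _.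
- exact: (is_derive_along_line (d1 _)).
- exact: (@is_derive_along_line (F1^~ e) (fun w => F2 w e) _ _ _ (d2 e _)).
- exact: (@is_derive_along_line (fun w => F2 w e e) (fun w => F3 w e e) _ _ _ (d3 e e _)).
Qed.

Lemma continuous_line_derivs3 F0 F1 F2 F3 (u e : U) :
  C3_derivs F0 F1 F2 F3 -> continuous (line_derivs F0 F1 F2 F3 u e 3).
Proof.
by case=> _ _ _ c3; exact: (@continuous_along_line (fun w => F3 w e e e) _ _ (c3 e e e)).
Qed.

End AlongLine.

Section LinearParameter.
Variables (R : realType) (U V : normedModType R).

Lemma is_diff_linear_param (f : V -> U -> R) (df : V -> U -> U -> R) :
  (forall w a v1 v2, f (a *: v1 + v2) w = a * f v1 w + f v2 w) ->
  (forall v w, is_diff w (f v) (df v w)) ->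
  forall w phi a v1 v2, df (a *: v1 + v2) w phi = a * df v1 w phi + df v2 w phi.
Proof.
move=> lin d w phi a v1 v2.
have fZD : f (a *: v1 + v2) = a *: f v1 + f v2 by apply/funext => x; rewrite lin.
have d12 : is_diff w (a *: f v1 + f v2) (a *: df v1 w + df v2 w).
  by apply: is_diffD; apply: is_diffZ.
have := @diff_val _ _ _ _ _ _ _ (d (a *: v1 + v2) w).
by rewrite fZD (@diff_val _ _ _ _ _ _ _ d12) => <-.
Qed.

Lemma C3_derivs_linear_param (A : U -> V -> R) (A1 : U -> U -> V -> R)
    (A2 : U -> U -> U -> V -> R) (A3 : U -> U -> U -> U -> V -> R) :
  (forall w a v1 v2, A w (a *: v1 + v2) = a * A w v1 + A w v2) ->
  (forall v, C3_derivs (fun w => A w v) (fun w phi => A1 w phi v)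
     (fun w phi psi => A2 w phi psi v) (fun w phi psi chi => A3 w phi psi chi v)) ->
  (forall w phi a v1 v2, A1 w phi (a *: v1 + v2) = a * A1 w phi v1 + A1 w phi v2) /\
  (forall w phi psi chi a v1 v2,
     A3 w phi psi chi (a *: v1 + v2) = a * A3 w phi psi chi v1 + A3 w phi psi chi v2).
Proof.
move=> lin d.
have lin1 w phi a v1 v2 : A1 w phi (a *: v1 + v2) = a * A1 w phi v1 + A1 w phi v2.
  by apply: (is_diff_linear_param (f := fun v w => A w v)
    (df := fun v w phi => A1 w phi v)) => // v w'; case: (d v).
have lin2 w phi psi a v1 v2 :
    A2 w phi psi (a *: v1 + v2) = a * A2 w phi psi v1 + A2 w phi psi v2.
  by apply: (is_diff_linear_param (f := fun v w => A1 w phi v)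
    (df := fun v w psi => A2 w phi psi v)) => // v w'; case: (d v).
split=> // w phi psi chi a v1 v2.
by apply: (is_diff_linear_param (f := fun v w => A2 w phi psi v)
    (df := fun v w chi => A3 w phi psi chi v)) => // v w'; case: (d v).
Qed.

End LinearParameter.

Lemma fin_dim_subspaceB (R : realType) (U : normedModType R) (S : set U) (x y : U) :
  fin_dim_subspace S -> S x -> S y -> S (x - y).
Proof.
move=> [n [b ->]] [c1 ->] [c2 ->]; exists (fun i => c1 i - c2 i).
by rewrite -sumrB; apply: eq_bigr => i _; rewrite scalerBl.
Qed.

Theorem mainTheorem5 (R : realType)
  (U V : completeNormedModType R)
  (A : U -> V -> R) (A1 : U -> U -> V -> R) (A2 : U -> U -> U -> V -> R)
  (A3 : U -> U -> U -> U -> V -> R)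
  (J : U -> R) (J1 : U -> U -> R) (J2 : U -> U -> U -> R)
  (J3 : U -> U -> U -> U -> R)
  (hA : dual_valued A)
  (hAd : forall v : V, C3_derivs (fun w => A w v) (fun w phi => A1 w phi v)
           (fun w phi psi => A2 w phi psi v) (fun w phi psi chi => A3 w phi psi chi v))
  (hJd : C3_derivs J J1 J2 J3)
  (Uh : set U) (Vh : set V)
  (hUh : fin_dim_subspace Uh) (hVh : fin_dim_subspace Vh)
  (uh : U) (huh : Uh uh) (huh_eq : forall v, Vh v -> A uh v = 0)
  (zh : V) (hzh : Vh zh)
  (hzh_eq : forall phi, Uh phi -> A1 uh phi zh = J1 uh phi)
  (ut : U) (hut : Uh ut) (zt : V) (hzt : Vh zt) :
  (J uh - J ut)%:E =
    ((1/2 * rho A ut (zh - zt) + 1/2 * rho_star J1 A1 ut zt (uh - ut)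
      + rho A ut zt)%:E + remainder32 J3 A2 A3 ut uh zt zh)%E.
Proof.
have [linA1 linA3] := C3_derivs_linear_param (fun w => proj1 (hA w)) hAd.
set e := uh - ut; set es := zh - zt.
have [he hes] : Uh e /\ Vh es by split; exact: fin_dim_subspaceB.
pose aA v := line_derivs (A^~ v) (fun w phi => A1 w phi v)
  (fun w phi psi => A2 w phi psi v) (fun w phi psi chi => A3 w phi psi chi v) ut e.
(* [g 0] is the Lagrangian [s |-> J u(s) - A u(s) z(s)] with [A u(s) z(s)] expanded by
   linearity in [z]; [g k] is its [k]-th derivative. *)
pose g k s := line_derivs J J1 J2 J3 ut e k s - aA zt k s
  - (k%:R * aA es k.-1 s + s * aA es k s).
have daA v : derive_chain 3 (aA v) by exact: derive_chain_line_derivs.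
have dg : derive_chain 3 g.
  apply: derive_chainB; last exact: derive_chain_mul_id.
  by apply: derive_chainB => //; exact: derive_chain_line_derivs.
have cg3 : continuous (g 3%N).
  have cJ3 := continuous_line_derivs3 (u := ut) (e := e) hJd.
  have cA3 v := continuous_line_derivs3 (u := ut) (e := e) (hAd v).
  have cM := continuous_derive_chain_mul_id (daA es) (cA3 es).
  by move=> s; apply: (continuousB (continuousB (cJ3 s) (cA3 zt s)) (cM s)).
have -> : remainder32 J3 A2 A3 ut uh zt zh = ((1/2)%:E *
    \int[@lebesgue_measure R]_(s in `[0%R, 1%R]) (g 3%N s * (s * (s - 1)))%:E)%E.
  congr (_ * _)%E; apply: eq_integral => s _; congr (EFin (_ * _)).
  by rewrite /g /aA /line_derivs /= (addrC zt) linA3; lra.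
rewrite trapezoid_rule_error // -EFinD; congr EFin.
have ue1 : ut + 1 *: e = uh by rewrite scale1r addrC subrK.
have ue0 : ut + 0 *: e = ut by rewrite scale0r addr0.
have A1zh : A1 uh e zh = A1 uh e es + A1 uh e zt.
  by rewrite -[A1 uh e es]mul1r -linA1 scale1r subrK.
rewrite /g /aA /line_derivs /= /rho /rho_star ue1 ue0 !huh_eq //.
have := hzh_eq e he; rewrite A1zh; lra.
Qed.
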